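(* Let $\mathcal G$ be a Lie superalgebra over a field of characteristic zero, with $\mathcal U_{1-}$, $\bullet$ and the extended bracket $[\cdot,\cdot]$ as described below. For any homogeneous $A,B,C\in\mathcal U_{1-}$, $$[A,B]\bullet C=[A,B\bullet C]+(-1)^{|B||C|}[A\bullet C,B].$$
   Context: Set $\mathcal U_1=\mathcal G$ with its $\mathbb Z_2$-grading. For $p\ge1$ define recursively $\mathcal U_{-p+1}=\mathrm{Hom}(\mathcal U_1,\mathcal U_{-p+2})$, $\mathbb Z_2$-graded by declaring $A$ even (resp. odd) if it preserves (resp. reverses) parity; $|u|$ is the parity of a homogeneous element. Elements of $\mathcal U_{1-p}$ are operators of order $p$ (elements of $\mathcal G$ have order $0$); $\mathcal U_{1-}=\bigoplus_{p\ge0}\mathcal U_{1-p}$. Define $\circ$: $A\circ y=A(y)$, $y\circ A=0$ for $A$ of order $\ge1$ and $y\in\mathcal U_1$; for $A,B$ of orders $\ge1$, recursively $(A\circ B)(x)=A\circ B(x)+(-1)^{|B||x|}A(x)\circ B$. Define $\bullet$: $A_p\bullet B_q=\frac{p!q!}{(p+q-1)!}A_p\circ B_q$ for orders $p,q\ge1$; $A_p\bullet x=pA_p(x)$, $x\bullet A_p=0$, $x\bullet y=0$ for $x,y\in\mathcal U_1$. The bracket of $\mathcal G$ is extended to $\mathcal U_{1-}$: on $\mathcal G$ it is the given bracket, and for operators $A,B$ of orders $p,q$ with $p+q\ge1$, $[A,B]$ is the operator of order $p+q$ (parity $|A|+|B|$) defined recursively by $[A,B]\bullet x=[A,B\bullet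 x]+(-1)^{|x||B|}[A\bullet x,B]$ for all $x\in\mathcal G$. *)

From HB Require Import structures.
From mathcomp Require Import all_boot all_order all_algebra.
Set Implicit Arguments. Unset Strict Implicit. Unset Printing Implicit Defensive.
Import GRing.Theory.
Local Open Scope ring_scope.

Definition ssgn (K : fieldType) (b c : bool) : K := if b && c then -1 else 1.

Section LSA.
Variables (K : fieldType) (G : lmodType K).

(* The Z2-grading
   G = G_0 (+) G_1 is given by the two linear projections [ls_pr false],
   [ls_pr true]; x is homogeneous of parity b iff ls_pr b x = x. *)
Record lie_superalgebra := LieSuperalgebra {
  ls_pr : bool -> G -> G;
  ls_pr_lin : forall b (a : K) x y, ls_pr b (a *: x + y) = a *: ls_pr b x + ls_pr b y;
  ls_pr_sum : forall x, ls_pr false x + ls_pr true x = x;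
  ls_pr_pr : forall b c x, ls_pr b (ls_pr c x) = if b == c then ls_pr c x else 0;
  ls_br : G -> G -> G;
  ls_br_linl : forall (a : K) x y z, ls_br (a *: x + y) z = a *: ls_br x z + ls_br y z;
  ls_br_linr : forall (a : K) x y z, ls_br x (a *: y + z) = a *: ls_br x y + ls_br x z;
  ls_br_par : forall b c x y, ls_pr b x = x -> ls_pr c y = y ->
      ls_pr (b (+) c) (ls_br x y) = ls_br x y;
  ls_br_anti : forall b c x y, ls_pr b x = x -> ls_pr c y = y ->
      ls_br x y = - (ssgn K b c *: ls_br y x);
  ls_br_jacobi : forall b c d x y z, ls_pr b x = x -> ls_pr c y = y -> ls_pr d z = z ->
      ls_br x (ls_br y z) = ls_br (ls_br x y) z + ssgn K b c *: ls_br y (ls_br x z)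
}.

Variable L : lie_superalgebra.

Definition homog (b : bool) (x : G) := ls_pr L b x = x.

(* An operator of order p (element of U_{1-p}) is represented by a function
   Op := seq G -> G whose value on a list [x1;...;xp] is A(x1)(x2)...(xp);
   values on lists of other lengths are irrelevant.  An element y of G
   (order 0) is represented by [cst y]. *)
Definition Op := seq G -> G.
Definition app (A : Op) (x : G) : Op := fun xs => A (x :: xs).
Definition cst (y : G) : Op := fun _ => y.
Definition op0 : Op := fun _ => 0.
Definition opadd (A B : Op) : Op := fun xs => A xs + B xs.
Definition opscale (a : K) (A : Op) : Op := fun xs => a *: A xs.
Definition opeq (n : nat) (A B : Op) := forall xs, size xs = n -> A xs = B xs.

Fixpoint is_op (p : nat) (A : Op) : Prop :=
  match p with
  | 0 => True
  | p'.+1 => (forall x, is_op p' (app A x)) /\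
             (forall (a : K) x y, opeq p' (app A (a *: x + y))
                                   (opadd (opscale a (app A x)) (app A y)))
  end.

Fixpoint has_parity (p : nat) (b : bool) (A : Op) : Prop :=
  match p with
  | 0 => homog b (A [::])
  | p'.+1 => forall c x, homog c x -> has_parity p' (b (+) c) (app A x)
  end.

Fixpoint circf (f p q : nat) (bB : bool) (A B : Op) : Op :=
  match q with
  | 0 => if p is 0 then op0 else app A (B [::])
  | q'.+1 =>
    match p with
    | 0 => op0
    | p'.+1 =>
      match f with
      | 0 => op0
      | f'.+1 => fun xs =>
          match xs with
          | [::] => 0
          | x :: xs' =>
            let t (i : bool) :=
              circf f' p q' (bB (+) i) A (app B (ls_pr L i x)) xs'
              + ssgn K bB i *: circf f' p' q bB (app A (ls_pr L i x)) B xs' in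
            t false + t true
          end
      end
    end
  end.

Definition circ p q bB A B := circf (p + q) p q bB A B.

Definition bul (p q : nat) (bB : bool) (A B : Op) : Op :=
  match p with
  | 0 => op0
  | _ => match q with
         | 0 => opscale p%:R (app A (B [::]))
         | _ => opscale ((p`! * q`!)%:R / ((p + q).-1)`!%:R) (circ p q bB A B)
         end
  end.

(* Extended bracket [A,B] of A of order p, B of order q and parity bB
   (fuel f = p + q): [A,B](x) = (p+q)^-1 ([A, B.x] + (-1)^{|x||B|} [A.x, B]),
   i.e. [A,B].x = [A,B.x] + (-1)^{|x||B|}[A.x,B]; terms where B.x resp. A.x
   is zero (q = 0 resp. p = 0) vanish. *)
Fixpoint brf (f p q : nat) (bB : bool) (A B : Op) : Op :=
  match f with
  | 0 => cst (ls_br L (A [::]) (B [::]))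
  | f'.+1 => fun xs =>
      match xs with
      | [::] => 0
      | x :: xs' =>
        let t (i : bool) :=
          (if q is q'.+1 then
             brf f' p q' (bB (+) i) A (bul q 0 bB B (cst (ls_pr L i x))) xs'
           else 0)
          + ssgn K i bB *:
          (if p is p'.+1 then
             brf f' p' q bB (bul p 0 bB A (cst (ls_pr L i x))) B xs'
           else 0) in
        ((p + q)%:R)^-1 *: (t false + t true)
      end
  end.

Definition lbrx p q bB A B := brf (p + q) p q bB A B.

End LSA.

(* Against a homogeneous element x, the bullet product with x is a super-derivation of
   both operations: (X • Y) • x = X • (Y • x) ± (X • x) • Y follows from the recursion
   defining ∘ together with the factorial normalisation of • (this is where
   characteristic 0 is needed), and [X, Y] • x = [X, Y • x] ± [X • x, Y] is the
   recursion defining the bracket.  An operator of positive order is determined by its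
   products with homogeneous elements, so it suffices to compare ([A, B] • C) • y with
   ([A, B • C] ± [A • C, B]) • y.  Expanding both sides with the two rules produces six
   brackets on each side; on the left they are grouped into the identity for the
   triples (A, B, C • y), (A, B • y, C) and (A • y, B, C), of smaller total order, so
   induction on p + q + r applies.  The base cases are r = 0, where the identity is the
   bracket recursion itself, and p = q = 0, where both sides vanish. *)

From HB Require Import structures.
From mathcomp Require Import all_boot all_order all_algebra.
From mathcomp Require Import zify ring.
From Stdlib Require Import FunctionalExtensionality.
Set Implicit Arguments. Unset Strict Implicit. Unset Printing Implicit Defensive.
Import GRing.Theory.
Local Open Scope ring_scope.

HB.instance Definition _ (K : fieldType) (G : lmodType K) (L : lie_superalgebra G) b :=
  GRing.isLinear.Build K G G *:%R (ls_pr L b) (ls_pr_lin L b).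

HB.instance Definition _ (K : fieldType) (G : lmodType K) (L : lie_superalgebra G) :=
  bilinear_isBilinear.Build K G G G *:%R *:%R (ls_br L)
    (fun z a x y => ls_br_linl L a x y z, fun x a y z => ls_br_linr L a x y z).

Definition bulx (K : fieldType) (G : lmodType K) (n : nat) (X : Op G) (x : G) : Op G :=
  opscale n%:R (app X x).

Section Operators.
Variables (K : fieldType) (G : lmodType K) (L : lie_superalgebra G).
Hypothesis HK : [pchar K] =i pred0.
Local Notation Op := (Op G).
Local Notation pr := (ls_pr L).

Lemma homog_ls_pr i x : homog L i (pr i x).
Proof. by rewrite /homog ls_pr_pr eqxx. Qed.

Lemma ls_pr_homog c x i : homog L c x -> pr i x = if i == c then x else 0.
Proof. by move=> <-; rewrite ls_pr_pr; case: eqP => // ->. Qed.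

Lemma natr_neq0 n : (0 < n)%N -> n%:R != 0 :> K.
Proof. by move=> n_gt0; rewrite ((pcharf0P K).1 HK) -lt0n. Qed.

Lemma is_op_app n (X : Op) x : is_op n.+1 X -> is_op n (app X x).
Proof. by case=> + _; apply. Qed.

Lemma is_op_linear n (X : Op) a x y xs : is_op n.+1 X -> size xs = n ->
  X ((a *: x + y) :: xs) = a *: X (x :: xs) + X (y :: xs).
Proof. by case=> _ lin; apply: lin. Qed.

Lemma is_opD n (X : Op) x y xs : is_op n.+1 X -> size xs = n ->
  X ((x + y) :: xs) = X (x :: xs) + X (y :: xs).
Proof. by move=> hX hs; rewrite -[x]scale1r (is_op_linear _ _ _ hX hs) !scale1r. Qed.

Lemma is_op_cons0 n (X : Op) xs : is_op n.+1 X -> size xs = n -> X (0 :: xs) = 0.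
Proof. by move=> hX hs; apply: (addrI (X (0 :: xs))); rewrite -(is_opD _ _ hX hs) !addr0. Qed.

Lemma is_opZ n (X : Op) a x xs : is_op n.+1 X -> size xs = n ->
  X ((a *: x) :: xs) = a *: X (x :: xs).
Proof.
by move=> hX hs; rewrite -[a *: x]addr0 (is_op_linear _ _ _ hX hs) (is_op_cons0 hX hs) addr0.
Qed.

Lemma is_op_split n (X : Op) x xs : is_op n.+1 X -> size xs = n ->
  X (x :: xs) = X (pr false x :: xs) + X (pr true x :: xs).
Proof. by move=> hX hs; rewrite -{1}(ls_pr_sum L x) (is_opD _ _ hX hs). Qed.

Lemma is_op_zero n (X : Op) : (forall xs, X xs = 0) -> is_op n X.
Proof.
elim: n X => [//|n IH] X X0; split=> [x|a x y xs _]; first by apply: IH => xs; apply: X0.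
by rewrite /app /opadd /opscale !X0 scaler0 addr0.
Qed.

Lemma is_op_add n (X Y : Op) : is_op n X -> is_op n Y -> is_op n (opadd X Y).
Proof.
elim: n X Y => [//|n IH] X Y hX hY; split=> [x|a x y xs hs].
  exact: IH (is_op_app x hX) (is_op_app x hY).
rewrite /app /opadd /opscale (is_op_linear _ _ _ hX hs) (is_op_linear _ _ _ hY hs).
by rewrite scalerDr addrACA.
Qed.

Lemma is_op_scale n a (X : Op) : is_op n X -> is_op n (opscale a X).
Proof.
elim: n X => [//|n IH] X hX; split=> [x|b x y xs hs].
  exact: IH (is_op_app x hX).
rewrite /app /opadd /opscale (is_op_linear _ _ _ hX hs).
by rewrite scalerDr !scalerA mulrC.
Qed.

Lemma is_op_bulx n (X : Op) x : is_op n X -> is_op n.-1 (bulx n X x).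
Proof. by case: n => [//|n] hX; apply/is_op_scale/is_op_app. Qed.

Lemma app_eq n (X X' : Op) x : opeq n.+1 X X' -> opeq n (app X x) (app X' x).
Proof. by move=> hX xs hs; apply: hX => /=; rewrite hs. Qed.

Lemma bulx_eq n m (X X' : Op) x : opeq n.+1 X X' -> opeq n (bulx m X x) (bulx m X' x).
Proof. by move=> hX xs hs; rewrite /bulx /opscale (app_eq _ hX). Qed.

Lemma app_linear n (X : Op) a x y : is_op n.+1 X ->
  opeq n (app X (a *: x + y)) (opadd (opscale a (app X x)) (app X y)).
Proof. by case=> _ lin; apply: lin. Qed.

Lemma app_opadd (X Y : Op) x : app (opadd X Y) x = opadd (app X x) (app Y x).
Proof. by []. Qed.

Lemma app_opscale a (X : Op) x : app (opscale a X) x = opscale a (app X x).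
Proof. by []. Qed.

Lemma bulxE n (X : Op) x xs : bulx n X x xs = n%:R *: X (x :: xs).
Proof. by []. Qed.

Lemma bulx_ord0 (X : Op) x xs : bulx 0 X x xs = 0.
Proof. exact: scale0r. Qed.

Lemma app0 n (X : Op) : is_op n.+1 X -> opeq n (app X 0) (@op0 _ G).
Proof. by move=> hX xs hs; rewrite /app (is_op_cons0 hX hs). Qed.

Lemma bulx0 n m (X : Op) : is_op n.+1 X -> opeq n (bulx m X 0) (@op0 _ G).
Proof. by move=> hX xs hs; rewrite /bulx /opscale (app0 hX hs) scaler0. Qed.

Lemma bulx_linear n (X : Op) a x y : is_op n X ->
  opeq n.-1 (bulx n X (a *: x + y)) (opadd (opscale a (bulx n X x)) (bulx n X y)).
Proof.
case: n => [|n] hX xs hs; first by rewrite /opadd /opscale !bulx_ord0 scaler0 addr0.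
by rewrite /bulx /opadd /opscale /app (is_op_linear _ _ _ hX hs) scalerDr !scalerA mulrC.
Qed.

Lemma bulx_opadd n (X Y : Op) x : bulx n (opadd X Y) x = opadd (bulx n X x) (bulx n Y x).
Proof. by apply: functional_extensionality => xs; apply: scalerDr. Qed.

Lemma bulx_opscale n a (X : Op) x : bulx n (opscale a X) x = opscale a (bulx n X x).
Proof. by apply: functional_extensionality => xs; rewrite /bulx /opscale !scalerA mulrC. Qed.

Lemma has_parity_scale n b a (X : Op) : has_parity L n b X -> has_parity L n b (opscale a X).
Proof.
elim: n b X => [|n IH] b X /=; first by rewrite /homog /opscale linearZ /= => ->.
by move=> hX c x hx; apply/IH/hX.
Qed.

Lemma has_parity_bulx n m b c (X : Op) x : homog L c x -> has_parity L n.+1 b X ->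
  has_parity L n (b (+) c) (bulx m X x).
Proof. by move=> hx hX; apply/has_parity_scale/hX. Qed.

Lemma opeq_homog_bulx n (X Y : Op) : is_op n.+1 X -> is_op n.+1 Y ->
  (forall c x, homog L c x -> opeq n (bulx n.+1 X x) (bulx n.+1 Y x)) -> opeq n.+1 X Y.
Proof.
move=> hX hY hXY [//|x xs] [hs]; rewrite (is_op_split x hX hs) (is_op_split x hY hs).
suff eq_pr i : X (pr i x :: xs) = Y (pr i x :: xs) by rewrite !eq_pr.
by apply: (scalerI (natr_neq0 (ltn0Sn n))); apply: hXY (homog_ls_pr i x) xs hs.
Qed.

End Operators.

Section Bracket.
Variables (K : fieldType) (G : lmodType K) (L : lie_superalgebra G).
Hypothesis HK : [pchar K] =i pred0.
Local Notation Op := (Op G).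
Local Notation pr := (ls_pr L).

Lemma brf_op0l f p q b (A B : Op) xs : (forall zs, A zs = 0) -> brf L f p q b A B xs = 0.
Proof.
elim: f p q b A B xs => [|f IH] p q b A B xs A0; first by rewrite /= /cst A0 linear0l.
case: xs => [//|x xs] /=; case: p q => [|p] [|q] /=;
  by rewrite ?IH ?scaler0 ?addr0 ?scaler0 // => zs; rewrite /opscale /app A0 scaler0.
Qed.

Lemma brf_op0r f p q b (A B : Op) xs : (forall zs, B zs = 0) -> brf L f p q b A B xs = 0.
Proof.
elim: f p q b A B xs => [|f IH] p q b A B xs B0; first by rewrite /= /cst B0 linear0r.
case: xs => [//|x xs] /=; case: p q => [|p] [|q] /=;
  by rewrite ?IH ?scaler0 ?addr0 ?scaler0 // => zs; rewrite /opscale /app B0 scaler0.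
Qed.

(* For q = 0 (resp. p = 0) the first (resp. second) summand is a bracket with the zero
   operator [bulx 0 _ _]; it stands for the term that [brf] omits. *)
Lemma brf_cons f p q b (A B : Op) x xs :
  brf L f.+1 p q b A B (x :: xs) = (p + q)%:R^-1 *:
    \sum_(i : bool) (brf L f p q.-1 (b (+) i) A (bulx q B (pr i x)) xs
                     + ssgn K i b *: brf L f p.-1 q b (bulx p A (pr i x)) B xs).
Proof.
rewrite big_bool [X in _ = _ *: X]addrC /=.
case: p q => [|p] [|q] //=;
  rewrite ?[brf L f _ 0 _ _ (bulx 0 _ _) _]brf_op0r ?[brf L f 0 _ _ (bulx 0 _ _) _ _]brf_op0l //;
  by move=> zs; apply: bulx_ord0.
Qed.

Lemma brf_eq f p q b (A A' B B' : Op) : (p + q)%N = f -> opeq p A A' -> opeq q B B' ->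
  opeq f (brf L f p q b A B) (brf L f p q b A' B').
Proof.
elim: f p q b A A' B B' => [|f IH] p q b A A' B B' hf hA hB.
  move: hf hA hB => /eqP; rewrite addn_eq0 => /andP[/eqP-> /eqP->] hA hB xs _.
  by rewrite /= /cst hA // hB.
move=> [//|x xs] [hs]; rewrite !brf_cons; congr (_ *: _); apply: eq_bigr => i _.
congr (_ + _ *: _).
  case: q hf hB => [|q] hf hB; first by rewrite !brf_op0r // => zs; rewrite bulx_ord0.
  by apply: IH => //; [lia | apply: bulx_eq].
case: p hf hA => [|p] hf hA; first by rewrite !brf_op0l // => zs; rewrite bulx_ord0.
by apply: IH => //; [lia | apply: bulx_eq].
Qed.

Lemma brf_addl f p q b (A1 A2 B : Op) xs :
  brf L f p q b (opadd A1 A2) B xs = brf L f p q b A1 B xs + brf L f p q b A2 B xs.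
Proof.
elim: f p q b A1 A2 B xs => [|f IH] p q b A1 A2 B xs; first by rewrite /= /cst /opadd linearDl.
case: xs => [|x xs]; first by rewrite /= addr0.
rewrite !brf_cons -scalerDr -big_split; congr (_ *: _); apply: eq_bigr => i _ /=.
by rewrite bulx_opadd !IH scalerDr addrACA.
Qed.

Lemma brf_scalel f p q b a (A B : Op) xs :
  brf L f p q b (opscale a A) B xs = a *: brf L f p q b A B xs.
Proof.
elim: f p q b A B xs => [|f IH] p q b A B xs; first by rewrite /= /cst /opscale linearZl_LR.
case: xs => [|x xs]; first by rewrite /= scaler0.
rewrite !brf_cons scalerA (mulrC a) -scalerA; congr (_ *: _).
rewrite scaler_sumr; apply: eq_bigr => i _.
by rewrite bulx_opscale !IH scalerDr !scalerA mulrC.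
Qed.

Lemma brf_addr f p q b (A B1 B2 : Op) xs :
  brf L f p q b A (opadd B1 B2) xs = brf L f p q b A B1 xs + brf L f p q b A B2 xs.
Proof.
elim: f p q b A B1 B2 xs => [|f IH] p q b A B1 B2 xs; first by rewrite /= /cst /opadd linearDr.
case: xs => [|x xs]; first by rewrite /= addr0.
rewrite !brf_cons -scalerDr -big_split; congr (_ *: _); apply: eq_bigr => i _ /=.
by rewrite bulx_opadd !IH scalerDr addrACA.
Qed.

Lemma brf_scaler f p q b a (A B : Op) xs :
  brf L f p q b A (opscale a B) xs = a *: brf L f p q b A B xs.
Proof.
elim: f p q b A B xs => [|f IH] p q b A B xs; first by rewrite /= /cst /opscale linearZr_LR.
case: xs => [|x xs]; first by rewrite /= scaler0.
rewrite !brf_cons scalerA (mulrC a) -scalerA; congr (_ *: _).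
rewrite scaler_sumr; apply: eq_bigr => i _.
by rewrite bulx_opscale !IH scalerDr !scalerA mulrC.
Qed.

Lemma brf_bulxr_linear f p q b (A B : Op) a y1 y2 xs :
  (p + q)%N = f.+1 -> is_op q B -> size xs = f ->
  brf L f p q.-1 b A (bulx q B (a *: y1 + y2)) xs
  = a *: brf L f p q.-1 b A (bulx q B y1) xs + brf L f p q.-1 b A (bulx q B y2) xs.
Proof.
case: q => [|q] hf hB hs; first by rewrite !brf_op0r ?scaler0 ?addr0 // => zs; rewrite bulx_ord0.
have hf' : (p + q)%N = f by lia.
by rewrite (brf_eq b hf' (fun _ _ => erefl) (bulx_linear a y1 y2 hB) hs) brf_addr brf_scaler.
Qed.

Lemma brf_bulxl_linear f p q b (A B : Op) a y1 y2 xs :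
  (p + q)%N = f.+1 -> is_op p A -> size xs = f ->
  brf L f p.-1 q b (bulx p A (a *: y1 + y2)) B xs
  = a *: brf L f p.-1 q b (bulx p A y1) B xs + brf L f p.-1 q b (bulx p A y2) B xs.
Proof.
case: p => [|p] hf hA hs; first by rewrite !brf_op0l ?scaler0 ?addr0 // => zs; rewrite bulx_ord0.
have hf' : (p + q)%N = f by lia.
by rewrite (brf_eq b hf' (bulx_linear a y1 y2 hA) (fun _ _ => erefl) hs) brf_addl brf_scalel.
Qed.

Lemma brf_is_op f p q b (A B : Op) : (p + q)%N = f -> is_op p A -> is_op q B ->
  is_op f (brf L f p q b A B).
Proof.
elim: f p q b A B => [//|f IH] p q b A B hf hA hB.
have brfr_is_op b' y : is_op f (brf L f p q.-1 b' A (bulx q B y)).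
  case: q hf hB => [|q] hf hB.
    by apply: is_op_zero => xs; apply: brf_op0r => zs; apply: bulx_ord0.
  by apply: IH => //; [lia | apply: is_op_bulx].
have brfl_is_op y : is_op f (brf L f p.-1 q b (bulx p A y) B).
  clear brfr_is_op; case: p hf hA => [|p] hf hA.
    by apply: is_op_zero => xs; apply: brf_op0l => zs; apply: bulx_ord0.
  by apply: IH => //; [lia | apply: is_op_bulx].
pose S i y := opadd (brf L f p q.-1 (b (+) i) A (bulx q B y))
                    (opscale (ssgn K i b) (brf L f p.-1 q b (bulx p A y) B)).
have S_is_op i y : is_op f (S i y) by apply/is_op_add/is_op_scale.
have S_linear i a x y xs : size xs = f -> S i (a *: x + y) xs = a *: S i x xs + S i y xs.
  move=> hs; rewrite /S /opadd /opscale brf_bulxr_linear // brf_bulxl_linear //.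
  by rewrite !scalerDr !scalerA (mulrC (ssgn K i b)) addrACA.
have brfE x : app (brf L f.+1 p q b A B) x
              = opscale (p + q)%:R^-1 (opadd (S true (pr true x)) (S false (pr false x))).
  by apply: functional_extensionality => xs; rewrite /app brf_cons big_bool.
split=> [x|a x y xs hs]; first by rewrite brfE; apply/is_op_scale/is_op_add.
rewrite !brfE /opadd /opscale !ls_pr_lin !S_linear //.
by rewrite scalerA (mulrC a) -scalerA -scalerDr [a *: (S _ _ _ + _)]scalerDr addrACA.
Qed.

Lemma lbrx_cons p q b (A B : Op) x xs : (0 < p + q)%N ->
  lbrx L p q b A B (x :: xs) = (p + q)%:R^-1 *:
    \sum_(i : bool) (lbrx L p q.-1 (b (+) i) A (bulx q B (pr i x)) xs
                     + ssgn K i b *: lbrx L p.-1 q b (bulx p A (pr i x)) B xs).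
Proof.
move=> pq_gt0; have [f hf] : exists f, (p + q)%N = f.+1 by exists (p + q).-1; lia.
rewrite /lbrx [in LHS]hf brf_cons; congr (_ *: _); apply: eq_bigr => i _.
congr (_ + _ *: _).
  case: q hf {pq_gt0} => [|q] hf; first by rewrite !brf_op0r // => zs; rewrite bulx_ord0.
  by have -> : (p + q.+1.-1)%N = f by lia.
case: p hf {pq_gt0} => [|p] hf; first by rewrite !brf_op0l // => zs; rewrite bulx_ord0.
by have -> : (p.+1.-1 + q)%N = f by lia.
Qed.

Lemma lbrx_op0l p q b (A B : Op) xs : (forall zs, A zs = 0) -> lbrx L p q b A B xs = 0.
Proof. by move=> A0; apply: brf_op0l. Qed.

Lemma lbrx_op0r p q b (A B : Op) xs : (forall zs, B zs = 0) -> lbrx L p q b A B xs = 0.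
Proof. by move=> B0; apply: brf_op0r. Qed.

Lemma lbrx_eq p q b (A A' B B' : Op) : opeq p A A' -> opeq q B B' ->
  opeq (p + q) (lbrx L p q b A B) (lbrx L p q b A' B').
Proof. exact: brf_eq. Qed.

Lemma lbrx_addl p q b (A1 A2 B : Op) xs :
  lbrx L p q b (opadd A1 A2) B xs = lbrx L p q b A1 B xs + lbrx L p q b A2 B xs.
Proof. exact: brf_addl. Qed.

Lemma lbrx_scalel p q b a (A B : Op) xs :
  lbrx L p q b (opscale a A) B xs = a *: lbrx L p q b A B xs.
Proof. exact: brf_scalel. Qed.

Lemma lbrx_addr p q b (A B1 B2 : Op) xs :
  lbrx L p q b A (opadd B1 B2) xs = lbrx L p q b A B1 xs + lbrx L p q b A B2 xs.
Proof. exact: brf_addr. Qed.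

Lemma lbrx_scaler p q b a (A B : Op) xs :
  lbrx L p q b A (opscale a B) xs = a *: lbrx L p q b A B xs.
Proof. exact: brf_scaler. Qed.

Lemma lbrx_is_op p q b (A B : Op) : is_op p A -> is_op q B -> is_op (p + q) (lbrx L p q b A B).
Proof. exact: brf_is_op. Qed.

Lemma lbrx_bulx0r p q b (A B : Op) xs : is_op q B -> size xs = (p + q).-1 ->
  lbrx L p q.-1 b A (bulx q B 0) xs = 0.
Proof.
case: q => [|q] hB hs; first by rewrite lbrx_op0r // => zs; rewrite bulx_ord0.
by rewrite (lbrx_eq b (fun _ _ => erefl) (bulx0 _ hB)) ?lbrx_op0r // hs addnS.
Qed.

Lemma lbrx_bulx0l p q b (A B : Op) xs : is_op p A -> size xs = (p + q).-1 ->
  lbrx L p.-1 q b (bulx p A 0) B xs = 0.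
Proof.
case: p => [|p] hA hs; first by rewrite lbrx_op0l // => zs; rewrite bulx_ord0.
by rewrite (lbrx_eq b (bulx0 _ hA) (fun _ _ => erefl)) ?lbrx_op0l // hs addSn.
Qed.

Lemma lbrx_bulx p q b (A B : Op) c x : is_op p A -> is_op q B -> homog L c x ->
  opeq (p + q).-1 (bulx (p + q) (lbrx L p q b A B) x)
    (opadd (lbrx L p q.-1 (b (+) c) A (bulx q B x))
           (opscale (ssgn K c b) (lbrx L p.-1 q b (bulx p A x) B))).
Proof.
move=> hA hB hx zs hs; rewrite bulxE /opadd /opscale.
have [pq0|pq_gt0] := posnP (p + q).
  move: pq0 hs => /eqP; rewrite addn_eq0 => /andP[/eqP-> /eqP->] _.
  by rewrite scale0r /lbrx /= /cst !bulx_ord0 linear0r linear0l scaler0 addr0.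
rewrite lbrx_cons // scalerA mulfV ?(natr_neq0 HK) // scale1r (bigD1 c) //= big1 ?addr0.
  by rewrite (ls_pr_homog c hx) eqxx.
move=> i /negbTE ic; rewrite (ls_pr_homog i hx) ic.
by rewrite lbrx_bulx0r // lbrx_bulx0l // scaler0 addr0.
Qed.

End Bracket.

Section Composition.
Variables (K : fieldType) (G : lmodType K) (L : lie_superalgebra G).
Local Notation Op := (Op G).
Local Notation pr := (ls_pr L).

Lemma circf_cons f p q b (A B : Op) x xs :
  circf L f.+1 p.+1 q.+1 b A B (x :: xs) =
  \sum_(i : bool) (circf L f p.+1 q (b (+) i) A (app B (pr i x)) xs
                   + ssgn K b i *: circf L f p q.+1 b (app A (pr i x)) B xs).
Proof. by rewrite big_bool [RHS]addrC. Qed.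

Lemma circf_op0l f p q b (A B : Op) xs : (forall zs, A zs = 0) -> circf L f p q b A B xs = 0.
Proof.
elim: f p q b A B xs => [|f IH] [|p] [|q] b A B xs A0 //; try by rewrite /= /app A0.
case: xs => [//|x xs]; rewrite circf_cons big1 // => i _.
by rewrite !IH ?scaler0 ?addr0 // => zs; rewrite /app A0.
Qed.

Lemma circf_eq f p q b (A A' B B' : Op) : (p + q)%N = f -> opeq p A A' -> opeq q B B' ->
  opeq (p + q).-1 (circf L f p q b A B) (circf L f p q b A' B').
Proof.
elim: f p q b A A' B B' => [|f IH] [|p] [|q] b A A' B B' hf hA hB xs hs //;
  try by rewrite /= /app hB // hA //= hs addn0.
case: xs hs => [//|x xs] hs; rewrite !circf_cons; apply: eq_bigr => i _.
have {}hs : size xs = (p + q)%N by move: hs => /= /eqP; rewrite addnS eqSS => /eqP.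
by congr (_ + _ *: _); apply: IH => //; rewrite ?hs; try lia; exact: app_eq.
Qed.

Lemma circf_addl f p q b (A1 A2 B : Op) xs :
  circf L f p q b (opadd A1 A2) B xs = circf L f p q b A1 B xs + circf L f p q b A2 B xs.
Proof.
elim: f p q b A1 A2 B xs => [|f IH] [|p] [|q] b A1 A2 B xs //; try by rewrite /= addr0.
case: xs => [|x xs]; first by rewrite /= addr0.
rewrite !circf_cons -big_split; apply: eq_bigr => i _ /=.
by rewrite app_opadd !IH scalerDr addrACA.
Qed.

Lemma circf_scalel f p q b a (A B : Op) xs :
  circf L f p q b (opscale a A) B xs = a *: circf L f p q b A B xs.
Proof.
elim: f p q b A B xs => [|f IH] [|p] [|q] b A B xs //; try by rewrite /= scaler0.
case: xs => [|x xs]; first by rewrite /= scaler0.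
rewrite !circf_cons scaler_sumr; apply: eq_bigr => i _ /=.
by rewrite app_opscale !IH scalerDr !scalerA mulrC.
Qed.

Lemma circf_addr f p q b (A B1 B2 : Op) : (p + q)%N = f -> is_op p A ->
  opeq (p + q).-1 (circf L f p q b A (opadd B1 B2))
                  (opadd (circf L f p q b A B1) (circf L f p q b A B2)).
Proof.
elim: f p q b A B1 B2 => [|f IH] [|p] [|q] b A B1 B2 hf hA xs hs;
  try by rewrite /opadd /= ?addr0.
all: try by rewrite /opadd /= /app (is_opD _ _ hA) // hs addn0.
case: xs hs => [|x xs] hs; first by rewrite /opadd /= addr0.
have {}hs : size xs = (p + q)%N by move: hs => /= /eqP; rewrite addnS eqSS => /eqP.
rewrite /opadd !circf_cons -big_split; apply: eq_bigr => i _ /=.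
rewrite app_opadd IH ?IH ?hs ?addnS //; [|lia|exact: is_op_app|lia].
by rewrite /opadd scalerDr addrACA.
Qed.

Lemma circf_scaler f p q b a (A B : Op) : (p + q)%N = f -> is_op p A ->
  opeq (p + q).-1 (circf L f p q b A (opscale a B)) (opscale a (circf L f p q b A B)).
Proof.
elim: f p q b A B => [|f IH] [|p] [|q] b A B hf hA xs hs;
  try by rewrite /opscale /= ?scaler0.
all: try by rewrite /opscale /= /app (is_opZ _ _ hA) // hs addn0.
case: xs hs => [|x xs] hs; first by rewrite /opscale /= scaler0.
have {}hs : size xs = (p + q)%N by move: hs => /= /eqP; rewrite addnS eqSS => /eqP.
rewrite /opscale !circf_cons scaler_sumr; apply: eq_bigr => i _ /=.
rewrite app_opscale IH ?IH ?hs ?addnS //; [|lia|exact: is_op_app|lia].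
by rewrite /opscale scalerDr !scalerA mulrC.
Qed.

Lemma circf_is_op f p q b (A B : Op) : (p + q)%N = f -> is_op p A -> is_op q B ->
  is_op (p + q).-1 (circf L f p q b A B).
Proof.
elim: f p q b A B => [|f IH] [|p] [|q] b A B hf hA hB;
  try by [apply: is_op_zero | rewrite addn0; apply: is_op_app].
have hf1 : (p.+1 + q)%N = f by lia.
have hf2 : (p + q.+1)%N = f by lia.
have -> : (p.+1 + q.+1).-1 = (p + q).+1 by lia.
pose S i y := opadd (circf L f p.+1 q (b (+) i) A (app B y))
                    (opscale (ssgn K b i) (circf L f p q.+1 b (app A y) B)).
have S_is_op i y : is_op (p + q) (S i y).
  apply: is_op_add; last apply: is_op_scale.
    by apply: IH => //; apply: is_op_app.
  by have := IH p q.+1 b (app A y) B hf2; rewrite addnS; apply=> //; apply: is_op_app.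
have S_linear i a y1 y2 xs : size xs = (p + q)%N ->
    S i (a *: y1 + y2) xs = a *: S i y1 xs + S i y2 xs.
  move=> hs; have hs2 : size xs = (p + q.+1).-1 by rewrite addnS.
  rewrite /S /opadd /opscale (circf_eq _ hf1 (fun _ _ => erefl) (app_linear a y1 y2 hB)) //.
  rewrite (circf_eq _ hf2 (app_linear a y1 y2 hA) (fun _ _ => erefl)) //.
  rewrite circf_addr // /opadd circf_scaler // circf_addl circf_scalel.
  by rewrite /opscale !scalerDr !scalerA (mulrC (ssgn K b i)) addrACA.
have circfE x : app (circf L f.+1 p.+1 q.+1 b A B) x
                = opadd (S true (pr true x)) (S false (pr false x)).
  by apply: functional_extensionality => xs; rewrite /app circf_cons big_bool.
split=> [x|a x y xs hs]; first by rewrite circfE; apply: is_op_add.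
by rewrite !circfE /opadd /opscale !ls_pr_lin !S_linear // [a *: (S _ _ _ + _)]scalerDr addrACA.
Qed.

Lemma circf_op0r f p q b (A B : Op) : (p + q)%N = f -> is_op p A -> opeq q B (@op0 _ G) ->
  opeq (p + q).-1 (circf L f p q b A B) (@op0 _ G).
Proof.
move=> hf hA hB xs hs.
have B_scale0 : opeq q B (opscale 0 B) by move=> zs hz; rewrite /opscale scale0r hB.
by rewrite (circf_eq b hf (fun _ _ => erefl) B_scale0) // circf_scaler // /opscale scale0r.
Qed.

End Composition.

Section Bullet.
Variables (K : fieldType) (G : lmodType K) (L : lie_superalgebra G).
Hypothesis HK : [pchar K] =i pred0.
Local Notation Op := (Op G).

Lemma bul_ord0l q b (A B : Op) : bul L 0 q b A B = @op0 _ G.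
Proof. by case: q. Qed.

Lemma bul_ord0r n b (A B : Op) : bul L n 0 b A B = bulx n A (B [::]).
Proof. by case: n => [|n] //; apply: functional_extensionality => xs; rewrite bulx_ord0. Qed.

Definition bul_coef p q : K := (p`! * q`!)%:R / ((p + q).-1)`!%:R.

Lemma bul_circ p q b (A B : Op) :
  bul L p.+1 q.+1 b A B = opscale (bul_coef p.+1 q.+1) (circ L p.+1 q.+1 b A B).
Proof. by []. Qed.

Lemma bul_op0l p q b (A B : Op) xs : (forall zs, A zs = 0) -> bul L p q b A B xs = 0.
Proof.
move=> A0; case: p q => [|p] [|q]; rewrite ?bul_ord0l ?bul_ord0r ?bul_circ //.
  by rewrite /bulx /opscale /app A0 scaler0.
by rewrite /opscale /circ circf_op0l // scaler0.
Qed.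

Lemma bul_eq p q b (A A' B B' : Op) : opeq p A A' -> opeq q B B' ->
  opeq (p + q).-1 (bul L p q b A B) (bul L p q b A' B').
Proof.
case: p q => [|p] [|q] hA hB; rewrite ?bul_ord0l ?bul_ord0r ?bul_circ // => xs hs.
  by rewrite hB // (bulx_eq _ _ hA) // hs addn0.
by rewrite /opscale /circ (circf_eq L b erefl hA hB).
Qed.

Lemma bul_addl p q b (A1 A2 B : Op) xs :
  bul L p q b (opadd A1 A2) B xs = bul L p q b A1 B xs + bul L p q b A2 B xs.
Proof.
case: p q => [|p] [|q]; rewrite ?bul_ord0l ?bul_ord0r ?bul_circ /=.
- by rewrite addr0.
- by rewrite addr0.
- by rewrite bulx_opadd.
by rewrite /opscale /circ circf_addl scalerDr.
Qed.

Lemma bul_scalel p q b a (A B : Op) xs :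
  bul L p q b (opscale a A) B xs = a *: bul L p q b A B xs.
Proof.
case: p q => [|p] [|q]; rewrite ?bul_ord0l ?bul_ord0r ?bul_circ /=.
- by rewrite scaler0.
- by rewrite scaler0.
- by rewrite bulx_opscale.
by rewrite /opscale /circ circf_scalel !scalerA mulrC.
Qed.

Lemma bul_is_op p q b (A B : Op) : is_op p A -> is_op q B -> is_op (p + q).-1 (bul L p q b A B).
Proof.
case: p q => [|p] [|q] hA hB; rewrite ?bul_ord0l ?bul_ord0r ?bul_circ.
- by apply: is_op_zero.
- by apply: is_op_zero.
- by rewrite addn0; apply: is_op_bulx.
by apply/is_op_scale/circf_is_op.
Qed.

Lemma fact_neq0 n : n`!%:R != 0 :> K.
Proof. exact/(natr_neq0 HK)/fact_gt0. Qed.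

Lemma bul_coefSr p q : (p + q).+1%:R * bul_coef p.+1 q.+1 = q.+1%:R * bul_coef p.+1 q.
Proof.
rewrite /bul_coef addSn addnS /= (factS (p + q)) (factS q) !natrM.
by field; rewrite fact_neq0 -natrD nat1r (natr_neq0 HK).
Qed.

Lemma bul_coefC p q : bul_coef p q = bul_coef q p.
Proof. by rewrite /bul_coef mulnC addnC. Qed.

Lemma bul_coefSl p q : (p + q).+1%:R * bul_coef p.+1 q.+1 = p.+1%:R * bul_coef p q.+1.
Proof. by rewrite bul_coefC [bul_coef p _]bul_coefC addnC bul_coefSr. Qed.

Lemma bul_coef_ord0 p : bul_coef p.+1 0 = p.+1%:R.
Proof. by rewrite /bul_coef addn0 fact0 muln1 factS natrM mulfK ?fact_neq0. Qed.

Lemma circf_appr_bul p s b (X Y : Op) x zs : is_op p.+1 X -> size zs = (p + s)%N ->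
  (p + s).+1%:R * bul_coef p.+1 s.+1 *: circf L (p + s.+1) p.+1 s b X (app Y x) zs
  = bul L p.+1 s b X (bulx s.+1 Y x) zs.
Proof.
move=> hX hs; rewrite bul_coefSr -scalerA.
case: s hs => [|s] hs; first by rewrite addn1 bul_coef_ord0 bul_ord0r /bulx /opscale /app !scale1r.
rewrite bul_circ /bulx /opscale /circ addSnnS circf_scaler //; last by rewrite addSnnS.
by rewrite /opscale !scalerA mulrC.
Qed.

Lemma circf_appl_bul p s b (X Y : Op) x zs :
  (p + s).+1%:R * bul_coef p.+1 s.+1 *: circf L (p + s.+1) p s.+1 b (app X x) Y zs
  = bul L p s.+1 b (bulx p.+1 X x) Y zs.
Proof.
rewrite bul_coefSl -scalerA; case: p => [|p]; first by rewrite bul_ord0l /= !scaler0.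
by rewrite bul_circ /bulx /opscale /circ circf_scalel !scalerA mulrC.
Qed.

Lemma bul_bulx m s bY (X Y : Op) c x : (0 < s)%N -> is_op m X -> is_op s Y -> homog L c x ->
  opeq (m + s).-2 (bulx (m + s).-1 (bul L m s bY X Y) x)
    (opadd (bul L m s.-1 (bY (+) c) X (bulx s Y x))
           (opscale (ssgn K bY c) (bul L m.-1 s bY (bulx m X x) Y))).
Proof.
case: s => [//|s] _ hX hY hx zs hs; rewrite bulxE /opadd /opscale.
case: m hX hs => [|p] hX hs; first by rewrite !bul_ord0l /op0 !scaler0 add0r.
have {}hs : size zs = (p + s)%N by move: hs; rewrite addSn addnS.
have -> : (p.+1 + s.+1).-1 = (p + s).+1 by lia.
rewrite bul_circ /opscale /circ circf_cons scalerA (bigD1 c) //= big1 ?addr0 => [|i /negbTE ic].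
  rewrite (ls_pr_homog c hx) eqxx scalerDr circf_appr_bul //.
  by rewrite scalerA (mulrC _ (ssgn K bY c)) -scalerA circf_appl_bul.
rewrite (ls_pr_homog i hx) ic (circf_op0r L _ (addSnnS p s) hX (app0 hY)) //.
rewrite (circf_eq L bY erefl (app0 hX) (fun _ _ => erefl)) ?circf_op0l //; last by rewrite addnS.
by rewrite /op0 scaler0 addr0.
Qed.

End Bullet.

Section Derivation.
Variables (K : fieldType) (G : lmodType K) (L : lie_superalgebra G).
Hypothesis HK : [pchar K] =i pred0.
Local Notation Op := (Op G).

Lemma ssgnC b c : ssgn K b c = ssgn K c b.
Proof. by rewrite /ssgn andbC. Qed.

Definition bul_derivation p q r bB bC (A B C : Op) : Prop :=
  opeq (p + q + r).-1
    (bul L (p + q) r bC (lbrx L p q bB A B) C)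
    (opadd (lbrx L p (q + r).-1 (bB (+) bC) A (bul L q r bC B C))
           (opscale (ssgn K bB bC) (lbrx L (p + r).-1 q bB (bul L p r bC A C) B))).

Lemma bul_derivation_ord0r p q bB bC (A B C : Op) :
  is_op p A -> is_op q B -> has_parity L 0 bC C -> bul_derivation p q 0 bB bC A B C.
Proof. by move=> hA hB hC; rewrite /bul_derivation !bul_ord0r !addn0 ssgnC; apply: lbrx_bulx. Qed.

Lemma bul_derivation_ord0l r bB bC (A B C : Op) : bul_derivation 0 0 r bB bC A B C.
Proof.
move=> xs _; rewrite /opadd /opscale !bul_ord0l.
by rewrite lbrx_op0r // lbrx_op0l // scaler0 addr0.
Qed.

(* When q = 0 (resp. p = 0 below), B • y (resp. A • y) is zero and all three terms
   vanish, so the identity for the smaller triple is only needed when q > 0. *)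
Lemma bul_derivation_bulxr p q r bB bC c (A B C : Op) y zs :
  ((0 < q)%N -> bul_derivation p q.-1 r.+1 (bB (+) c) bC A (bulx q B y) C) ->
  size zs = (p + q + r).-1 ->
  bul L (p + q).-1 r.+1 bC (lbrx L p q.-1 (bB (+) c) A (bulx q B y)) C zs =
  lbrx L p (q + r).-1 (bB (+) c (+) bC) A (bul L q.-1 r.+1 bC (bulx q B y) C) zs
  + ssgn K (bB (+) c) bC *: lbrx L (p + r) q.-1 (bB (+) c) (bul L p r.+1 bC A C) (bulx q B y) zs.
Proof.
case: q => [|q] IH hs.
  rewrite bul_op0l => [|zs']; last by apply: lbrx_op0r => ?; apply: bulx_ord0.
  rewrite lbrx_op0r => [|zs']; last by rewrite bul_ord0l.
  rewrite lbrx_op0r => [|zs']; last exact: bulx_ord0.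
  by rewrite scaler0 addr0.
have := IH isT; rewrite /bul_derivation !addnS /= => -> //.
by rewrite hs; lia.
Qed.

Lemma bul_derivation_bulxl p q r bB bC (A B C : Op) y zs :
  ((0 < p)%N -> bul_derivation p.-1 q r.+1 bB bC (bulx p A y) B C) ->
  size zs = (p + q + r).-1 ->
  bul L (p + q).-1 r.+1 bC (lbrx L p.-1 q bB (bulx p A y) B) C zs =
  lbrx L p.-1 (q + r) (bB (+) bC) (bulx p A y) (bul L q r.+1 bC B C) zs
  + ssgn K bB bC *: lbrx L (p + r).-1 q bB (bul L p.-1 r.+1 bC (bulx p A y) C) B zs.
Proof.
case: p => [|p] IH hs.
  rewrite bul_op0l => [|zs']; last by apply: lbrx_op0l => ?; apply: bulx_ord0.
  rewrite lbrx_op0l => [|zs']; last exact: bulx_ord0.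
  rewrite lbrx_op0l => [|zs']; last by rewrite bul_ord0l.
  by rewrite scaler0 addr0.
have := IH isT; rewrite /bul_derivation !addnS /= => -> //.
Qed.

Lemma lbrx_bulx_bulr m q r b bC c (X B C : Op) y zs :
  is_op q B -> is_op r.+1 C -> homog L c y -> size zs = (m + q + r).-1 ->
  lbrx L m (q + r).-1 b X (bulx (q + r) (bul L q r.+1 bC B C) y) zs =
  lbrx L m (q + r).-1 b X (bul L q r (bC (+) c) B (bulx r.+1 C y)) zs
  + ssgn K bC c *: lbrx L m (q + r).-1 b X (bul L q.-1 r.+1 bC (bulx q B y) C) zs.
Proof.
move=> hB hC hy hs; have [qr0|qr_gt0] := posnP (q + r).
  move: qr0 hs => /eqP; rewrite addn_eq0 => /andP[/eqP-> /eqP->] _.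
  by rewrite !lbrx_op0r ?scaler0 ?addr0 // => ?; rewrite ?bulx_ord0 ?bul_ord0l.
have := lbrx_eq L b (fun _ _ => erefl) (bul_bulx HK bC (ltn0Sn r) hB hC hy).
rewrite !addnS /= => ->; last by rewrite hs; lia.
by rewrite lbrx_addr lbrx_scaler.
Qed.

Lemma lbrx_bulx_bull p n r b bC c (A C Y : Op) y zs :
  is_op p A -> is_op r.+1 C -> homog L c y -> size zs = (p + n + r).-1 ->
  lbrx L (p + r).-1 n b (bulx (p + r) (bul L p r.+1 bC A C) y) Y zs =
  lbrx L (p + r).-1 n b (bul L p r (bC (+) c) A (bulx r.+1 C y)) Y zs
  + ssgn K bC c *: lbrx L (p + r).-1 n b (bul L p.-1 r.+1 bC (bulx p A y) C) Y zs.
Proof.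
move=> hA hC hy hs; have [pr0|pr_gt0] := posnP (p + r).
  move: pr0 hs => /eqP; rewrite addn_eq0 => /andP[/eqP-> /eqP->] _.
  by rewrite !lbrx_op0l ?scaler0 ?addr0 // => ?; rewrite ?bulx_ord0 ?bul_ord0l.
have := lbrx_eq L b (bul_bulx HK bC (ltn0Sn r) hA hC hy) (fun _ _ => erefl).
rewrite !addnS /= => ->; last by rewrite hs; lia.
by rewrite lbrx_addl lbrx_scalel.
Qed.

Lemma bul_lbrx_bulx p q r bB bC c (A B C : Op) y zs : (0 < p + q)%N ->
  is_op p A -> is_op q B -> is_op r.+1 C -> homog L c y -> size zs = (p + q + r).-1 ->
  (p + q + r)%:R *: bul L (p + q) r.+1 bC (lbrx L p q bB A B) C (y :: zs) =
  bul L (p + q) r (bC (+) c) (lbrx L p q bB A B) (bulx r.+1 C y) zs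
  + ssgn K bC c *: (bul L (p + q).-1 r.+1 bC (lbrx L p q.-1 (bB (+) c) A (bulx q B y)) C zs
     + ssgn K c bB *: bul L (p + q).-1 r.+1 bC (lbrx L p.-1 q bB (bulx p A y) B) C zs).
Proof.
move=> pq_gt0 hA hB hC hy hs; rewrite -bulxE.
have := bul_bulx HK bC (ltn0Sn r) (lbrx_is_op L bB hA hB) hC hy.
rewrite !addnS /= => ->; last by rewrite hs.
have := bul_eq L bC (lbrx_bulx HK bB hA hB hy) (fun _ _ => erefl).
by rewrite /opadd /opscale => ->; [rewrite bul_addl bul_scalel | rewrite hs; lia].
Qed.

Lemma lbrx_bul_bulxr p q r bB bC c (A B C : Op) y zs :
  is_op p A -> is_op q B -> is_op r.+1 C -> homog L c y -> size zs = (p + q + r).-1 ->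
  (p + q + r)%:R *: lbrx L p (q + r) (bB (+) bC) A (bul L q r.+1 bC B C) (y :: zs) =
  lbrx L p (q + r).-1 (bB (+) bC (+) c) A (bul L q r (bC (+) c) B (bulx r.+1 C y)) zs
  + ssgn K bC c *: lbrx L p (q + r).-1 (bB (+) bC (+) c) A (bul L q.-1 r.+1 bC (bulx q B y) C) zs
  + ssgn K c (bB (+) bC) *: lbrx L p.-1 (q + r) (bB (+) bC) (bulx p A y) (bul L q r.+1 bC B C) zs.
Proof.
move=> hA hB hC hy hs.
have hBC : is_op (q + r) (bul L q r.+1 bC B C) by have := bul_is_op L bC hB hC; rewrite addnS.
rewrite -bulxE -addnA.
have := lbrx_bulx HK (bB (+) bC) hA hBC hy; rewrite /opadd /opscale => ->.
  by rewrite (lbrx_bulx_bulr _ _ _ hB hC hy) // addnA.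
by rewrite hs addnA.
Qed.

Lemma lbrx_bul_bulxl p q r bB bC c (A B C : Op) y zs :
  is_op p A -> is_op q B -> is_op r.+1 C -> homog L c y -> size zs = (p + q + r).-1 ->
  (p + q + r)%:R *: lbrx L (p + r) q bB (bul L p r.+1 bC A C) B (y :: zs) =
  lbrx L (p + r) q.-1 (bB (+) c) (bul L p r.+1 bC A C) (bulx q B y) zs
  + ssgn K c bB *: (lbrx L (p + r).-1 q bB (bul L p r (bC (+) c) A (bulx r.+1 C y)) B zs
     + ssgn K bC c *: lbrx L (p + r).-1 q bB (bul L p.-1 r.+1 bC (bulx p A y) C) B zs).
Proof.
move=> hA hB hC hy hs.
have hAC : is_op (p + r) (bul L p r.+1 bC A C) by have := bul_is_op L bC hA hC; rewrite addnS.
rewrite -bulxE addnAC.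
have := lbrx_bulx HK bB hAC hB hy; rewrite /opadd /opscale => ->.
  by rewrite (lbrx_bulx_bull _ _ _ hA hC hy) // addnAC.
by rewrite hs addnAC.
Qed.

(* a1, ..., a6 stand for [A, B•(C•y)], [A•(C•y), B], [A, (B•y)•C], [A•C, B•y],
   [A•y, B•C] and [(A•y)•C, B]. *)
Lemma derivation_signs (a1 a2 a3 a4 a5 a6 : G) bB bC c :
  (a1 + ssgn K bB (bC (+) c) *: a2)
  + ssgn K bC c *: ((a3 + ssgn K (bB (+) c) bC *: a4) + ssgn K c bB *: (a5 + ssgn K bB bC *: a6))
  = (a1 + ssgn K bC c *: a3 + ssgn K c (bB (+) bC) *: a5)
    + ssgn K bB bC *: (a4 + ssgn K c bB *: (a2 + ssgn K bC c *: a6)).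
Proof.
rewrite !scalerDr !scalerA -!addrA; congr (_ + _).
rewrite [in RHS](addrCA (_ *: a4)) [in RHS](addrCA (_ *: a5)) [in RHS](addrCA (_ *: a3)).
rewrite [in RHS](addrCA (_ *: a5)).
by congr (_ *: _ + (_ *: _ + (_ *: _ + (_ *: _ + _ *: _))));
  case: bB bC c => [] [] []; rewrite /ssgn /=; ring.
Qed.

Lemma bul_derivation_step p q r bB bC (A B C : Op) :
  (forall p' q' r' bB' bC' (A' B' C' : Op), (p' + q' + r' < p + q + r.+1)%N ->
     is_op p' A' -> is_op q' B' -> is_op r' C' -> has_parity L r' bC' C' ->
     bul_derivation p' q' r' bB' bC' A' B' C') ->
  (0 < p + q)%N -> is_op p A -> is_op q B -> is_op r.+1 C -> has_parity L r.+1 bC C ->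
  bul_derivation p q r.+1 bB bC A B C.
Proof.
move=> IH pq_gt0 hA hB hC hPC; rewrite /bul_derivation !addnS /=.
have [n hn] : exists n, (p + q + r)%N = n.+1 by exists (p + q + r).-1; lia.
rewrite hn; apply: (opeq_homog_bulx (L := L) HK) => [||c y hy zs hz].
- by have := bul_is_op L bC (lbrx_is_op L bB hA hB) hC; rewrite addnS hn.
- apply: is_op_add; last apply: is_op_scale.
    by have := lbrx_is_op L (bB (+) bC) hA (bul_is_op L bC hB hC); rewrite addnS addnA hn.
  by have := lbrx_is_op L bB (bul_is_op L bC hA hC) hB; rewrite addnS addnAC hn.
have {}hz : size zs = (p + q + r).-1 by rewrite hn.
rewrite !bulxE -hn /opadd /opscale scalerDr scalerA (mulrC _ (ssgn K bB bC)) -scalerA.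
rewrite (bul_lbrx_bulx bB bC pq_gt0 hA hB hC hy hz) (lbrx_bul_bulxr bB bC hA hB hC hy hz).
rewrite (lbrx_bul_bulxl bB bC hA hB hC hy hz).
rewrite (IH p q r bB (bC (+) c) A B (bulx r.+1 C y)) //; last 3 first.
- by rewrite addnS ltnSn.
- exact: is_op_bulx.
- exact: has_parity_bulx.
rewrite bul_derivation_bulxr // => [|q_gt0]; last first.
  by apply: IH => //; [lia | exact: is_op_bulx].
rewrite bul_derivation_bulxl // => [|p_gt0]; last first.
  by apply: IH => //; [lia | exact: is_op_bulx].
rewrite /opadd /opscale -!addbA (addbC c bC).
exact: derivation_signs.
Qed.

Lemma bul_derivation_holds p q r bB bC (A B C : Op) :
  is_op p A -> is_op q B -> is_op r C -> has_parity L r bC C -> bul_derivation p q r bB bC A B C.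
Proof.
move=> hA hB hC hPC; have [N] := ubnP (p + q + r).
elim: N p q r bB bC A B C hA hB hC hPC => // N IH p q r bB bC A B C hA hB hC hPC lt_N.
case: r hC hPC lt_N => [|r] hC hPC lt_N; first exact: bul_derivation_ord0r.
have [pq0|pq_gt0] := posnP (p + q).
  by move: pq0 => /eqP; rewrite addn_eq0 => /andP[/eqP-> /eqP->]; apply: bul_derivation_ord0l.
apply: bul_derivation_step => // p' q' r' bB' bC' A' B' C' lt_pqr hA' hB' hC' hPC'.
by apply: IH => //; lia.
Qed.

End Derivation.

Theorem proposition4p3 (K : fieldType) (HK : [pchar K] =i pred0)
  (G : lmodType K) (L : lie_superalgebra G)
  (p q r : nat) (bA bB bC : bool) (A B C : Op G) :
  is_op p A -> is_op q B -> is_op r C ->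
  has_parity L p bA A -> has_parity L q bB B -> has_parity L r bC C ->
  opeq ((p + q + r).-1)
    (bul L (p + q) r bC (lbrx L p q bB A B) C)
    (opadd (lbrx L p (q + r).-1 (bB (+) bC) A (bul L q r bC B C))
           (opscale (ssgn K bB bC) (lbrx L (p + r).-1 q bB (bul L p r bC A C) B))).
Proof.
(* Only the parity of C enters, through the base case r = 0. *)
by move=> hA hB hC _ _ hPC; apply: bul_derivation_holds.
Qed.
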